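(* For all integers $n, k \geq 1$ with $n \geq k$, $$\sum_{i=k}^{n} \frac{S(n-1,i-1)\, s(i,k)}{i} = \frac{1}{n}\binom{n}{k} B_{n-k}.$$
   Context: For $n \geq 0$, $X^{\underline{n}} := X(X-1)\cdots(X-n+1)$ ($X^{\underline{0}}=1$). The (signed) Stirling numbers of the first kind $s(n,k)$ are defined by $X^{\underline{n}} = \sum_{k=0}^{n} s(n,k) X^k$, and the Stirling numbers of the second kind $S(n,k)$ by $X^n = \sum_{k=0}^{n} S(n,k) X^{\underline{k}}$ (for all $n\ge 0$), with $s(n,k)=S(n,k)=0$ when $n<k$. The Bernoulli numbers $B_n$ are defined by $\frac{t}{e^t-1} = \sum_{n\ge 0} B_n \frac{t^n}{n!}$. *)

From mathcomp Require Import all_boot all_order all_algebra.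
Set Implicit Arguments. Unset Strict Implicit. Unset Printing Implicit Defensive.
Import Order.TTheory GRing.Theory Num.Theory.
Local Open Scope ring_scope.

Definition falling_poly (n : nat) : {poly rat} :=
  \prod_(i < n) ('X - (i%:R)%:P).

(* Signed Stirling numbers of the first kind: X^{\underline n} = sum_k s(n,k) X^k. *)
Definition stirling1 (n k : nat) : rat := (falling_poly n)`_k.

(* Stirling numbers of the second kind, via the standard recurrence
   S(0,0)=1, S(0,k+1)=0, S(n+1,0)=0, S(n+1,k+1) = (k+1) S(n,k+1) + S(n,k),
   which is equivalent to X^n = sum_k S(n,k) X^{\underline k}. *)
Fixpoint stirling2 (n k : nat) : rat :=
  match n, k with
  | 0, 0 => 1
  | 0, _.+1 => 0
  | _.+1, 0 => 0
  | n'.+1, k'.+1 => (k'.+1)%:R * stirling2 n' k'.+1 + stirling2 n' k'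
  end.

(* Bernoulli numbers with t/(e^t-1) = sum B_n t^n/n!.  Comparing coefficients
   of t^{n+1}/(n+1)! in (e^t - 1) * sum B_j t^j/j! = t gives
   sum_{j<=n} C(n+1,j) B_j = [n = 0], i.e.
   B_n = ([n=0] - sum_{j<n} C(n+1,j) B_j) / (n+1). *)
Fixpoint bern_seq (n : nat) : seq rat :=
  match n with
  | 0 => [:: 1]
  | n'.+1 =>
      let s := bern_seq n' in
      rcons s (- (\sum_(j < n'.+1) ('C(n'.+2, j))%:R * s`_j) / (n'.+2)%:R)
  end.

Definition bernoulli (n : nat) : rat := (bern_seq n)`_n.

From mathcomp Require Import all_boot all_order all_algebra.
From mathcomp Require Import ring zify.
Import GRing.Theory Num.Theory.
Local Open Scope ring_scope.

(* Both sides are the coefficient of x^k in the polynomial F with F(0) = 0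
   and F(x + 1) = F(x) + x^(n-1).  Since x^{\underline{j+1}} has forward
   difference (j+1) x^{\underline j}, expanding x^(n-1) in falling factorials
   gives F = \sum_j S(n-1,j)/(j+1) x^{\underline{j+1}}, whose x^k-coefficient
   is the left-hand side.  The Bernoulli recurrence shows that Faulhaber's
   polynomial (1/n) \sum_k C(n,k) B_{n-k} x^k has the same forward difference,
   so it is F up to its constant term, and its x^k-coefficient is the
   right-hand side.  Two polynomials with the same forward differences on the
   naturals differ by a constant, because a nonzero polynomial has finitely
   many roots. *)

Lemma mul_bin_subC n r l : ('C(n, r) * 'C(n - r, l) = 'C(n, l) * 'C(n - l, r))%N.
Proof.
have bin_mul_fact a b : (a + b <= n)%N ->
    ('C(n, a) * 'C(n - a, b) * (a`! * b`! * (n - a - b)`!) = n`!)%N.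
  move=> le_abn; rewrite -(@bin_fact n a); last by lia.
  by rewrite -(@bin_fact (n - a) b); [ring | lia].
have bin_mul_eq0 a b : (n < a + b)%N -> ('C(n, a) * 'C(n - a, b) = 0)%N.
  move=> lt_nab; case: (leqP a n) => le_an.
    by rewrite (@bin_small (n - a)) ?muln0 //; lia.
  by rewrite bin_small.
case: (leqP (r + l) n) => [le_rln | lt_nrl]; last by rewrite !bin_mul_eq0 // addnC.
have fact_gt0 : (0 < r`! * l`! * (n - r - l)`!)%N by rewrite !muln_gt0 !fact_gt0.
apply/eqP; rewrite -(eqn_pmul2r fact_gt0) bin_mul_fact //.
by rewrite [(r`! * _)%N]mulnC subnAC bin_mul_fact // addnC.
Qed.

Lemma exprD1n_widen {R : pzSemiRingType} (x : R) k N : (k <= N)%N ->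
  (x + 1) ^+ k = \sum_(l < N.+1) 'C(k, l)%:R * x ^+ l.
Proof.
move=> le_kN; rewrite exprD1n (big_ord_widen N.+1 (fun l => x ^+ l *+ 'C(k, l))) //.
rewrite big_mkcond; apply: eq_bigr => l _; rewrite mulr_natl.
by case: ltnP => // /bin_small->.
Qed.

Lemma poly_nat_eq0 {R : numDomainType} (p : {poly R}) :
  (forall m : nat, p.[m%:R] = 0) -> p = 0.
Proof.
move=> p_nat0; apply/eqP; apply: contraT => p_neq0.
have := max_poly_roots p_neq0 (rs := [seq i%:R | i <- iota 0 (size p)]).
rewrite size_map size_iota ltnn; apply.
  by apply/allP => _ /mapP[i _ ->]; rewrite /root p_nat0.
by rewrite map_inj_uniq ?iota_uniq //; apply: mulrIn; rewrite oner_neq0.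
Qed.

Lemma polyC_of_nat_shift_invariant {R : numDomainType} (p : {poly R}) :
  (forall m : nat, p.[m.+1%:R] = p.[m%:R]) -> p = p.[0]%:P.
Proof.
move=> p_shift; apply/eqP; rewrite -subr_eq0; apply/eqP/poly_nat_eq0 => m.
rewrite hornerD hornerN hornerC; apply/eqP; rewrite subr_eq0; apply/eqP.
by elim: m => [|m IH]; rewrite ?p_shift.
Qed.

Lemma size_falling_poly i : size (falling_poly i) = i.+1.
Proof. by rewrite size_prod_XsubC /index_enum -enumT size_enum_ord. Qed.

Lemma stirling1_eq0 i k : (i < k)%N -> stirling1 i k = 0.
Proof. by move=> lt_ik; rewrite /stirling1 nth_default ?size_falling_poly. Qed.

Lemma falling_polyS i : falling_poly i.+1 = falling_poly i * ('X - i%:R%:P).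
Proof. by rewrite /falling_poly big_ord_recr. Qed.

Lemma falling_polySl i : falling_poly i.+1 = 'X * \prod_(j < i) ('X - j.+1%:R%:P).
Proof. by rewrite /falling_poly big_ord_recl subr0. Qed.

Lemma horner0_falling_polyS i : (falling_poly i.+1).[0] = 0.
Proof. by rewrite falling_polySl hornerM hornerX mul0r. Qed.

Lemma horner_falling_polyS_shift i (x : rat) :
  (falling_poly i.+1).[x + 1] = (x + 1) * (falling_poly i).[x].
Proof.
rewrite falling_polySl hornerM hornerX !horner_prod; congr (_ * _).
by apply: eq_bigr => j _; rewrite !hornerE -natr1 opprD addrACA subrr addr0.
Qed.

Lemma horner_falling_polyS_add1 i (x : rat) :
  (falling_poly i.+1).[x + 1]
  = (falling_poly i.+1).[x] + i.+1%:R * (falling_poly i).[x].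
Proof.
by rewrite horner_falling_polyS_shift falling_polyS hornerM !hornerE -natr1; ring.
Qed.

Lemma mulX_falling_poly j :
  'X * falling_poly j = falling_poly j.+1 + j%:R *: falling_poly j.
Proof. by rewrite falling_polyS -mul_polyC; ring. Qed.

Lemma stirling2_eq0 N k : (N < k)%N -> stirling2 N k = 0.
Proof.
elim: N k => [|N IH] [|k] //= lt_Nk.
by rewrite !IH ?mulr0 ?add0r // ltnW.
Qed.

Lemma stirling2_expansion N :
  'X^N = \sum_(j < N.+1) stirling2 N j *: falling_poly j.
Proof.
elim: N => [|N IH]; first by rewrite big_ord1 scale1r /falling_poly big_ord0.
rewrite exprS IH mulr_sumr.
under eq_bigr => j _ do rewrite -scalerAr mulX_falling_poly scalerDr.
rewrite big_split [RHS]big_ord_recl scale0r add0r /=.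
under [RHS]eq_bigr => j _ do rewrite add0n /bump leq0n add1n scalerDl.
rewrite big_split addrC; congr (_ + _).
rewrite big_ord_recl scale0r scaler0 add0r big_ord_recr /= stirling2_eq0 //.
rewrite mulr0 scale0r addr0.
by apply: eq_bigr => j _; rewrite /bump leq0n add1n scalerA mulrC.
Qed.

Definition stirling_sum_poly n : {poly rat} :=
  \sum_(i < n.+1) (stirling2 n i / i.+1%:R) *: falling_poly i.+1.

Lemma horner_stirling_sum_poly_add1 n (x : rat) :
  (stirling_sum_poly n).[x + 1] = (stirling_sum_poly n).[x] + x ^+ n.
Proof.
rewrite -[x ^+ n]hornerXn stirling2_expansion !horner_sum -big_split.
apply: eq_bigr => i _.
by rewrite !hornerZ horner_falling_polyS_add1 mulrDr mulrA divfK ?pnatr_eq0.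
Qed.

Lemma horner0_stirling_sum_poly n : (stirling_sum_poly n).[0] = 0.
Proof.
by rewrite horner_sum big1 // => i _; rewrite hornerZ horner0_falling_polyS mulr0.
Qed.

Lemma coef_stirling_sum_poly n k : (0 < k)%N ->
  (stirling_sum_poly n)`_k
  = \sum_(k <= i < n.+2) stirling2 n i.-1 * stirling1 i k / i%:R.
Proof.
move=> k_gt0; rewrite (big_nat_widenl _ _ _ _ _ k_gt0) big_add1 big_mkord /=.
rewrite coef_sum [RHS]big_mkcond /=; apply: eq_bigr => i _; rewrite coefZ.
case: leqP => [_ | lt_ik]; first by rewrite mulrAC.
by rewrite [_`_k]stirling1_eq0 // mulr0.
Qed.

Lemma size_bern_seq n : size (bern_seq n) = n.+1.
Proof. by elim: n => //= n IH; rewrite size_rcons IH. Qed.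

Lemma nth_bern_seq N j : (j <= N)%N -> (bern_seq N)`_j = bernoulli j.
Proof.
elim: N => [|N IH]; first by rewrite leqn0 => /eqP->.
rewrite leq_eqVlt => /predU1P[-> //|lt_jN].
by rewrite /= nth_rcons size_bern_seq lt_jN IH.
Qed.

Lemma bernoulliS n :
  bernoulli n.+1 = - (\sum_(j < n.+1) 'C(n.+2, j)%:R * bernoulli j) / n.+2%:R.
Proof.
rewrite /bernoulli /= nth_rcons size_bern_seq ltnn eqxx.
by congr (- _ / _); apply: eq_bigr => j _; rewrite nth_bern_seq // -ltnS.
Qed.

Lemma sum_bin_bernoulli n :
  \sum_(j < n.+1) 'C(n, j)%:R * bernoulli j = bernoulli n + (n == 1)%:R.
Proof.
rewrite big_ord_recr /= binn mul1r addrC; congr (_ + _).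
case: n => [|[|n]]; first by rewrite big_ord0.
  by rewrite big_ord1 bin0 mul1r.
rewrite big_ord_recr /= bernoulliS binSn.
by field; rewrite -natrD pnatr_eq0.
Qed.

Lemma sum_bin_bernoulli_bin n l : (l <= n)%N ->
  \sum_(k < n.+1) 'C(n, k)%:R * bernoulli (n - k) * 'C(k, l)%:R
  = 'C(n, l)%:R * (bernoulli (n - l) + (n - l == 1)%N%:R).
Proof.
move=> le_ln; rewrite (reindex_inj rev_ord_inj) /=.
under eq_bigr => k _.
  rewrite subSS bin_sub ?subKn ?leq_ord // mulrAC -natrM mul_bin_subC natrM -mulrA.
over.
rewrite -mulr_sumr -sum_bin_bernoulli; congr (_ * _).
rewrite [RHS](big_ord_widen n.+1 (fun k => 'C(n - l, k)%:R * bernoulli k)) ?ltnS ?leq_subr //.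
rewrite [RHS]big_mkcond; apply: eq_bigr => k _.
by case: ifP => // /negbT; rewrite -leqNgt => /bin_small->; rewrite mul0r.
Qed.

Definition faulhaber_coef n k : rat :=
  'C(n.+1, k)%:R * bernoulli (n.+1 - k) / n.+1%:R.

Definition faulhaber_poly n : {poly rat} := \poly_(k < n.+2) faulhaber_coef n k.

Lemma sum_faulhaber_coef_bin n l : (l <= n.+1)%N ->
  \sum_(k < n.+2) faulhaber_coef n k * 'C(k, l)%:R
  = faulhaber_coef n l + (l == n)%:R.
Proof.
move=> le_ln; rewrite /faulhaber_coef.
under eq_bigr => k _ do rewrite mulrAC.
rewrite -mulr_suml sum_bin_bernoulli_bin // mulrDr mulrDl; congr (_ + _).
have [-> | ne_ln] := eqVneq l n; first by rewrite subSnn binSn mulr1 divff ?pnatr_eq0.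
by rewrite (_ : (n.+1 - l == 1)%N = false) ?mulr0 ?mul0r //; lia.
Qed.

Lemma horner_faulhaber_poly_add1 n (x : rat) :
  (faulhaber_poly n).[x + 1] = (faulhaber_poly n).[x] + x ^+ n.
Proof.
rewrite !horner_poly.
under eq_bigr => k _ do rewrite (exprD1n_widen x k n.+1 (ltn_ord k)) mulr_sumr.
under eq_bigr => k _ do under eq_bigr => l _ do rewrite mulrA.
rewrite exchange_big /=.
under eq_bigr => l _ do rewrite -mulr_suml (sum_faulhaber_coef_bin n l (ltn_ord l)) mulrDl.
rewrite big_split /=; congr (_ + _).
under eq_bigr => l _ do rewrite mulr_natl mulrb.
by rewrite -big_mkcond big_ord1_eq ltnW.
Qed.

Lemma stirling_sum_polyE n :
  stirling_sum_poly n = faulhaber_poly n - (faulhaber_poly n).[0]%:P.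
Proof.
rewrite -[LHS](subrK (faulhaber_poly n)) [X in X + _]polyC_of_nat_shift_invariant.
  by rewrite hornerD hornerN horner0_stirling_sum_poly sub0r polyCN addrC.
move=> m; rewrite -natr1 !hornerD !hornerN.
rewrite horner_stirling_sum_poly_add1 horner_faulhaber_poly_add1.
by rewrite opprD addrACA subrr addr0.
Qed.

Theorem corollary2 (n k : nat) (hk : (1 <= k)%N) (hkn : (k <= n)%N) :
  \sum_(k <= i < n.+1) stirling2 n.-1 i.-1 * stirling1 i k / i%:R
  = (n%:R)^-1 * ('C(n, k))%:R * bernoulli (n - k).
Proof.
case: n hkn => [|n] hkn; first by case: k hk hkn.
rewrite -coef_stirling_sum_poly // stirling_sum_polyE coefB coefC gtn_eqF // subr0.
by rewrite coef_poly ltnS hkn /faulhaber_coef mulrC mulrA.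
Qed.
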